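(* Let $\mathcal D$ be a normal duoidal category (so $\iota\colon\bot\to 1$ is an isomorphism), and let $T$ be a double opmonoidal monad on $\mathcal D$. Consider the four linear distributors $\partial^\ell_\ell\colon a\circ(b\bullet c)\cong(a\bullet 1)\circ(b\bullet c)\xrightarrow{\zeta}(a\circ b)\bullet(1\circ c)\cong(a\circ b)\bullet c$, $\partial^\ell_r\colon a\circ(b\bullet c)\cong(1\bullet a)\circ(b\bullet c)\xrightarrow{\zeta}(1\circ b)\bullet(a\circ c)\cong b\bullet(a\circ c)$, $\partial^r_\ell\colon (b\bullet c)\circ a\cong(b\bullet c)\circ(a\bullet 1)\xrightarrow{\zeta}(b\circ a)\bullet(c\circ 1)\cong(b\circ a)\bullet c$, $\partial^r_r\colon (b\bullet c)\circ a\cong(b\bullet c)\circ(1\bullet a)\xrightarrow{\zeta}(b\circ 1)\bullet(c\circ a)\cong b\bullet(c\circ a)$, where the unnamed isomorphisms are built from the unitors of $\bullet$ and $\circ$ and $\iota^{\pm1}$ (using $1\cong\bot$). Then for all objects $a,b,c$ of $\mathcal D$ (in particular for all $T$-algebras): (1) $(T^\circ_{2,a,b}\bullet Tc)\cdot T^\bullet_{2,a\circ b,c}\cdot T\partial^\ell_\ell = \partial^\ell_\ell\cdot(Ta\circ T^\bullet_{2,b,c})\cdot T^\circ_{2,a,b\bullet c}$; (2) $(Tb\bullet T^\circ_{2,c,a})\cdot T^\bullet_{2,b,c\circ a}\cdot T\partial^r_r = \partial^r_r\cdot(T^\bullet_{2,b,c}\circ Ta)\cdot T^\circ_{2,b\bullet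 c,a}$; (3) $(Tb\bullet T^\circ_{2,a,c})\cdot T^\bullet_{2,b,a\circ c}\cdot T\partial^\ell_r = \partial^\ell_r\cdot(Ta\circ T^\bullet_{2,b,c})\cdot T^\circ_{2,a,b\bullet c}$; (4) $(T^\circ_{2,b,a}\bullet Tc)\cdot T^\bullet_{2,b\circ a,c}\cdot T\partial^r_\ell = \partial^r_\ell\cdot(T^\bullet_{2,b,c}\circ Ta)\cdot T^\circ_{2,b\bullet c,a}$. Consequently $T$ lifts the (planar) linearly distributive structure of $\mathcal D$ to $\mathcal D^T$.
   Context: Composition of morphisms is written $g\cdot f$ ($f$ first). A duoidal category is a category $\mathcal D$ with monoidal structures $(\circ,\bot)$ and $(\bullet,1)$ (unitors $\lambda^\circ,\rho^\circ,\lambda^\bullet,\rho^\bullet$, associators $\alpha$), a natural transformation $\zeta_{x,y,a,b}\colon (x\bullet y)\circ(a\bullet b)\to(x\circ a)\bullet(y\circ b)$ and morphisms $\nu\colon\bot\to\bot\bullet\bot$, $\varpi\colon 1\circ 1\to 1$, $\iota\colon\bot\to 1$ such that $(1,\varpi,\iota)$ is a monoid in $(\mathcal D,\circ,\bot)$, $(\bot,\nu,\iota)$ is a comonoid in $(\mathcal D,\bullet,1)$, and: $(\alpha\bullet\alpha)\cdot\zeta_{x\circ a,y\circ b,c,d}\cdot(\zeta_{x,y,a,b}\circ\mathrm{id}) = \zeta_{x,y,a\circ c,b\circ d}\cdot(\mathrm{id}\circ\zeta_{a,b,c,d})\cdot\alpha$; $\alpha\cdot(\zeta_{x,a,y,b}\bullet\mathrm{id})\cdot\zeta_{x\bullet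 a,c,y\bullet b,d} = (\mathrm{id}\bullet\zeta_{a,c,b,d})\cdot\zeta_{x,a\bullet c,y,b\bullet d}\cdot(\alpha\circ\alpha)$; $\zeta_{\bot,\bot,a,b}\cdot(\nu\circ\mathrm{id})=((\lambda^\circ_a)^{-1}\bullet(\lambda^\circ_b)^{-1})\cdot\lambda^\circ_{a\bullet b}$, $\zeta_{a,b,\bot,\bot}\cdot(\mathrm{id}\circ\nu)=((\rho^\circ_a)^{-1}\bullet(\rho^\circ_b)^{-1})\cdot\rho^\circ_{a\bullet b}$, $(\varpi\bullet\mathrm{id})\cdot\zeta_{1,a,1,b}=(\lambda^\bullet_{a\circ b})^{-1}\cdot(\lambda^\bullet_a\circ\lambda^\bullet_b)$, $(\mathrm{id}\bullet\varpi)\cdot\zeta_{a,1,b,1}=(\rho^\bullet_{a\circ b})^{-1}\cdot(\rho^\bullet_a\circ\rho^\bullet_b)$. It is normal if $\bot\cong 1$ (equivalently $\iota$ is invertible). A bimonad on a monoidal category $(\mathcal C,\otimes,I)$ is a monad $(B,\mu,\eta)$ with an opmonoidal structure $B_2\colon B(x\otimes y)\to Bx\otimes By$, $B_0\colon BI\to I$ such that $\mu,\eta$ are opmonoidal natural transformations. A double opmonoidal monad on a duoidal category $\mathcal D$ is a monad $(T,\mu,\eta)$ with bimonad structures $(T^\bullet_2,T^\bullet_0)$ on $(\mathcal D,\bullet,1)$ and $(T^\circ_2,T^\circ_0)$ on $(\mathcal D,\circ,\bot)$ such that $T^\bullet_0\cdot T\varpi=\varpi\cdot(T^\bullet_0\circ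 T^\bullet_0)\cdot T^\circ_{2,1,1}$, $(T^\circ_0\bullet T^\circ_0)\cdot T^\bullet_{2,\bot,\bot}\cdot T\nu=\nu\cdot T^\circ_0$, $T^\bullet_0\cdot T\iota=\iota\cdot T^\circ_0$, and for all objects $\zeta_{Ta,Tb,Tc,Td}\cdot(T^\bullet_{2,a,b}\circ T^\bullet_{2,c,d})\cdot T^\circ_{2,a\bullet b,c\bullet d} = (T^\circ_{2,a,c}\bullet T^\circ_{2,b,d})\cdot T^\bullet_{2,a\circ c,b\circ d}\cdot T\zeta_{a,b,c,d}$. *)

(* Composition is written  g ⋅ f  (f first). *)

Record CatData := {
  Ob :> Type;
  Hom : Ob -> Ob -> Type;
  idm : forall a, Hom a a;
  comp : forall a b c, Hom b c -> Hom a b -> Hom a c }.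
Arguments Hom {_} _ _.
Arguments idm {_} _.
Arguments comp {_ _ _ _} _ _.
Notation "g ⋅ f" := (comp g f) (at level 40, left associativity).

Record IsCategory (C : CatData) : Prop := {
  comp_idl : forall (a b : C) (f : Hom a b), idm b ⋅ f = f;
  comp_idr : forall (a b : C) (f : Hom a b), f ⋅ idm a = f;
  comp_assoc : forall (a b c d : C) (h : Hom c d) (g : Hom b c) (f : Hom a b),
      h ⋅ (g ⋅ f) = (h ⋅ g) ⋅ f }.

Record Category := { cdata :> CatData; claws : IsCategory cdata }.

Record MonoidalData (C : CatData) := {
  tens : C -> C -> C;
  tensm : forall a b c d : C, Hom a b -> Hom c d -> Hom (tens a c) (tens b d);
  munit : C;
  assoc : forall a b c : C, Hom (tens (tens a b) c) (tens a (tens b c));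
  associ : forall a b c : C, Hom (tens a (tens b c)) (tens (tens a b) c);
  lam : forall a : C, Hom (tens munit a) a;
  lami : forall a : C, Hom a (tens munit a);
  rho : forall a : C, Hom (tens a munit) a;
  rhoi : forall a : C, Hom a (tens a munit) }.
Arguments tens {C} _ _ _.
Arguments tensm {C} _ {a b c d} _ _.
Arguments munit {C} _.
Arguments assoc {C} _ _ _ _.
Arguments associ {C} _ _ _ _.
Arguments lam {C} _ _.
Arguments lami {C} _ _.
Arguments rho {C} _ _.
Arguments rhoi {C} _ _.

Record IsMonoidal (C : CatData) (M : MonoidalData C) : Prop := {
  tens_id : forall a c : C, tensm M (idm a) (idm c) = idm (tens M a c);
  tens_comp : forall (a b e c d k : C) (g : Hom b e) (f : Hom a b)
      (g' : Hom d k) (f' : Hom c d),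
      tensm M (g ⋅ f) (g' ⋅ f') = tensm M g g' ⋅ tensm M f f';
  assoc_nat : forall (a a' b b' c c' : C) (f : Hom a a') (g : Hom b b') (h : Hom c c'),
      assoc M a' b' c' ⋅ tensm M (tensm M f g) h
      = tensm M f (tensm M g h) ⋅ assoc M a b c;
  assoc_inv1 : forall a b c : C, assoc M a b c ⋅ associ M a b c = idm _;
  assoc_inv2 : forall a b c : C, associ M a b c ⋅ assoc M a b c = idm _;
  lam_nat : forall (a b : C) (f : Hom a b),
      lam M b ⋅ tensm M (idm (munit M)) f = f ⋅ lam M a;
  lam_inv1 : forall a : C, lam M a ⋅ lami M a = idm _;
  lam_inv2 : forall a : C, lami M a ⋅ lam M a = idm _;
  rho_nat : forall (a b : C) (f : Hom a b),
      rho M b ⋅ tensm M f (idm (munit M)) = f ⋅ rho M a;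
  rho_inv1 : forall a : C, rho M a ⋅ rhoi M a = idm _;
  rho_inv2 : forall a : C, rhoi M a ⋅ rho M a = idm _;
  triangle : forall a b : C,
      tensm M (idm a) (lam M b) ⋅ assoc M a (munit M) b = tensm M (rho M a) (idm b);
  pentagon : forall a b c d : C,
      assoc M a b (tens M c d) ⋅ assoc M (tens M a b) c d
      = tensm M (idm a) (assoc M b c d) ⋅ assoc M a (tens M b c) d
        ⋅ tensm M (assoc M a b c) (idm d) }.
Arguments IsMonoidal {C} M.

Record Monoidal (C : CatData) := { mdata :> MonoidalData C; mlaws : IsMonoidal mdata }.

Record DuoidalData := {
  dcat : Category;
  circ : Monoidal dcat;
  bul : Monoidal dcat;
  zeta : forall x y a b : dcat,
      Hom (tens circ (tens bul x y) (tens bul a b))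
          (tens bul (tens circ x a) (tens circ y b));
  nu : Hom (munit circ) (tens bul (munit circ) (munit circ));
  varpi : Hom (tens circ (munit bul) (munit bul)) (munit bul);
  iota : Hom (munit circ) (munit bul) }.
Arguments zeta {_} _ _ _ _.
Arguments nu {_}.
Arguments varpi {_}.
Arguments iota {_}.

Definition oc (D : DuoidalData) := tens (circ D).
Definition ob (D : DuoidalData) := tens (bul D).
Definition ocm (D : DuoidalData) {a b c d : dcat D} (f : Hom a b) (g : Hom c d) :=
  tensm (circ D) f g.
Definition obm (D : DuoidalData) {a b c d : dcat D} (f : Hom a b) (g : Hom c d) :=
  tensm (bul D) f g.
Definition bot (D : DuoidalData) := munit (circ D).
Definition one (D : DuoidalData) := munit (bul D).

Record IsDuoidal (D : DuoidalData) : Prop := {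
  zeta_nat : forall (x x' y y' a a' b b' : dcat D) (f : Hom x x') (g : Hom y y')
      (h : Hom a a') (k : Hom b b'),
      zeta x' y' a' b' ⋅ ocm D (obm D f g) (obm D h k)
      = obm D (ocm D f h) (ocm D g k) ⋅ zeta x y a b;
  (* (1, varpi, iota) is a monoid in (D, ∘, ⊥) *)
  varpi_assoc :
      varpi ⋅ ocm D varpi (idm (one D))
      = varpi ⋅ ocm D (idm (one D)) varpi ⋅ assoc (circ D) (one D) (one D) (one D);
  varpi_lunit : varpi ⋅ ocm D iota (idm (one D)) = lam (circ D) (one D);
  varpi_runit : varpi ⋅ ocm D (idm (one D)) iota = rho (circ D) (one D);
  (* (⊥, nu, iota) is a comonoid in (D, •, 1) *)
  nu_coassoc :
      assoc (bul D) (bot D) (bot D) (bot D) ⋅ obm D nu (idm (bot D)) ⋅ nu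
      = obm D (idm (bot D)) nu ⋅ nu;
  nu_lcounit : obm D iota (idm (bot D)) ⋅ nu = lami (bul D) (bot D);
  nu_rcounit : obm D (idm (bot D)) iota ⋅ nu = rhoi (bul D) (bot D);
  zeta_assoc_circ : forall x y a b c d : dcat D,
      obm D (assoc (circ D) x a c) (assoc (circ D) y b d)
        ⋅ zeta (oc D x a) (oc D y b) c d ⋅ ocm D (zeta x y a b) (idm (ob D c d))
      = zeta x y (oc D a c) (oc D b d) ⋅ ocm D (idm (ob D x y)) (zeta a b c d)
        ⋅ assoc (circ D) (ob D x y) (ob D a b) (ob D c d);
  zeta_assoc_bul : forall x y a b c d : dcat D,
      assoc (bul D) (oc D x y) (oc D a b) (oc D c d)
        ⋅ obm D (zeta x a y b) (idm (oc D c d)) ⋅ zeta (ob D x a) c (ob D y b) d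
      = obm D (idm (oc D x y)) (zeta a c b d) ⋅ zeta x (ob D a c) y (ob D b d)
        ⋅ ocm D (assoc (bul D) x a c) (assoc (bul D) y b d);
  zeta_nu_l : forall a b : dcat D,
      zeta (bot D) (bot D) a b ⋅ ocm D nu (idm (ob D a b))
      = obm D (lami (circ D) a) (lami (circ D) b) ⋅ lam (circ D) (ob D a b);
  zeta_nu_r : forall a b : dcat D,
      zeta a b (bot D) (bot D) ⋅ ocm D (idm (ob D a b)) nu
      = obm D (rhoi (circ D) a) (rhoi (circ D) b) ⋅ rho (circ D) (ob D a b);
  zeta_varpi_l : forall a b : dcat D,
      obm D varpi (idm (oc D a b)) ⋅ zeta (one D) a (one D) b
      = lami (bul D) (oc D a b) ⋅ ocm D (lam (bul D) a) (lam (bul D) b);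
  zeta_varpi_r : forall a b : dcat D,
      obm D (idm (oc D a b)) varpi ⋅ zeta a (one D) b (one D)
      = rhoi (bul D) (oc D a b) ⋅ ocm D (rho (bul D) a) (rho (bul D) b) }.

Record Duoidal := { ddata :> DuoidalData; dlaws : IsDuoidal ddata }.

(* Normality: iota : ⊥ -> 1 is an isomorphism (its inverse, unique, as data). *)
Record NormalStructure (D : DuoidalData) := {
  iotai : Hom (one D) (bot D);
  iota_inv1 : iota ⋅ iotai = idm (one D);
  iota_inv2 : iotai ⋅ iota = idm (bot D) }.
Arguments iotai {D} _.

Record MonadData (C : CatData) := {
  T0 :> C -> C;
  T1 : forall a b : C, Hom a b -> Hom (T0 a) (T0 b);
  mu : forall a : C, Hom (T0 (T0 a)) (T0 a);
  eta : forall a : C, Hom a (T0 a) }.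
Arguments T1 {C} _ {a b} _.
Arguments mu {C} _ _.
Arguments eta {C} _ _.

Record IsMonad (C : CatData) (T : MonadData C) : Prop := {
  T1_id : forall a : C, T1 T (idm a) = idm (T a);
  T1_comp : forall (a b c : C) (g : Hom b c) (f : Hom a b), T1 T (g ⋅ f) = T1 T g ⋅ T1 T f;
  mu_nat : forall (a b : C) (f : Hom a b), mu T b ⋅ T1 T (T1 T f) = T1 T f ⋅ mu T a;
  eta_nat : forall (a b : C) (f : Hom a b), eta T b ⋅ f = T1 T f ⋅ eta T a;
  mu_assoc : forall a : C, mu T a ⋅ T1 T (mu T a) = mu T a ⋅ mu T (T a);
  mu_eta_l : forall a : C, mu T a ⋅ T1 T (eta T a) = idm (T a);
  mu_eta_r : forall a : C, mu T a ⋅ eta T (T a) = idm (T a) }.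
Arguments IsMonad {C} T.

Record OpmonData (C : CatData) (M : MonoidalData C) (T : MonadData C) := {
  op2 : forall x y : C, Hom (T (tens M x y)) (tens M (T x) (T y));
  op0 : Hom (T (munit M)) (munit M) }.
Arguments OpmonData {C} M T.
Arguments op2 {C M T} _ _ _.
Arguments op0 {C M T} _.

Record IsBimonad (C : CatData) (M : MonoidalData C) (T : MonadData C)
    (B : OpmonData M T) : Prop := {
  op2_nat : forall (x x' y y' : C) (f : Hom x x') (g : Hom y y'),
      op2 B x' y' ⋅ T1 T (tensm M f g) = tensm M (T1 T f) (T1 T g) ⋅ op2 B x y;
  op2_assoc : forall x y z : C,
      assoc M (T x) (T y) (T z) ⋅ tensm M (op2 B x y) (idm (T z)) ⋅ op2 B (tens M x y) z
      = tensm M (idm (T x)) (op2 B y z) ⋅ op2 B x (tens M y z) ⋅ T1 T (assoc M x y z);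
  op_lunit : forall x : C,
      lam M (T x) ⋅ tensm M (op0 B) (idm (T x)) ⋅ op2 B (munit M) x = T1 T (lam M x);
  op_runit : forall x : C,
      rho M (T x) ⋅ tensm M (idm (T x)) (op0 B) ⋅ op2 B x (munit M) = T1 T (rho M x);
  mu_op2 : forall x y : C,
      op2 B x y ⋅ mu T (tens M x y)
      = tensm M (mu T x) (mu T y) ⋅ op2 B (T x) (T y) ⋅ T1 T (op2 B x y);
  mu_op0 : op0 B ⋅ mu T (munit M) = op0 B ⋅ T1 T (op0 B);
  eta_op2 : forall x y : C,
      op2 B x y ⋅ eta T (tens M x y) = tensm M (eta T x) (eta T y);
  eta_op0 : op0 B ⋅ eta T (munit M) = idm (munit M) }.
Arguments IsBimonad {C M T} B.

Record DoubleOpmonoidalMonad (D : DuoidalData) := {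
  dmon :> MonadData (dcat D);
  dmon_laws : IsMonad dmon;
  Tbul : OpmonData (bul D) dmon;
  Tbul_laws : IsBimonad Tbul;
  Tcirc : OpmonData (circ D) dmon;
  Tcirc_laws : IsBimonad Tcirc;
  dm_varpi : op0 Tbul ⋅ T1 dmon varpi
      = varpi ⋅ ocm D (op0 Tbul) (op0 Tbul) ⋅ op2 Tcirc (one D) (one D);
  dm_nu : obm D (op0 Tcirc) (op0 Tcirc) ⋅ op2 Tbul (bot D) (bot D) ⋅ T1 dmon nu
      = nu ⋅ op0 Tcirc;
  dm_iota : op0 Tbul ⋅ T1 dmon iota = iota ⋅ op0 Tcirc;
  dm_zeta : forall a b c d : dcat D,
      zeta (dmon a) (dmon b) (dmon c) (dmon d)
        ⋅ ocm D (op2 Tbul a b) (op2 Tbul c d) ⋅ op2 Tcirc (ob D a b) (ob D c d)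
      = obm D (op2 Tcirc a c) (op2 Tcirc b d) ⋅ op2 Tbul (oc D a c) (oc D b d)
        ⋅ T1 dmon (zeta a b c d) }.
Arguments Tbul {D} _.
Arguments Tcirc {D} _.

(* ∂^l_l : a∘(b•c) ≅ (a•1)∘(b•c) --ζ--> (a∘b)•(1∘c) ≅ (a∘b)•c *)
Definition dist_ll (D : DuoidalData) (N : NormalStructure D) (a b c : dcat D)
  : Hom (oc D a (ob D b c)) (ob D (oc D a b) c) :=
  obm D (idm (oc D a b)) (lam (circ D) c ⋅ ocm D (iotai N) (idm c))
  ⋅ zeta a (one D) b c ⋅ ocm D (rhoi (bul D) a) (idm (ob D b c)).

(* ∂^l_r : a∘(b•c) ≅ (1•a)∘(b•c) --ζ--> (1∘b)•(a∘c) ≅ b•(a∘c) *)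
Definition dist_lr (D : DuoidalData) (N : NormalStructure D) (a b c : dcat D)
  : Hom (oc D a (ob D b c)) (ob D b (oc D a c)) :=
  obm D (lam (circ D) b ⋅ ocm D (iotai N) (idm b)) (idm (oc D a c))
  ⋅ zeta (one D) a b c ⋅ ocm D (lami (bul D) a) (idm (ob D b c)).

(* ∂^r_l : (b•c)∘a ≅ (b•c)∘(a•1) --ζ--> (b∘a)•(c∘1) ≅ (b∘a)•c *)
Definition dist_rl (D : DuoidalData) (N : NormalStructure D) (a b c : dcat D)
  : Hom (oc D (ob D b c) a) (ob D (oc D b a) c) :=
  obm D (idm (oc D b a)) (rho (circ D) c ⋅ ocm D (idm c) (iotai N))
  ⋅ zeta b c a (one D) ⋅ ocm D (idm (ob D b c)) (rhoi (bul D) a).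

(* ∂^r_r : (b•c)∘a ≅ (b•c)∘(1•a) --ζ--> (b∘1)•(c∘a) ≅ b•(c∘a) *)
Definition dist_rr (D : DuoidalData) (N : NormalStructure D) (a b c : dcat D)
  : Hom (oc D (ob D b c) a) (ob D b (oc D c a)) :=
  obm D (rho (circ D) b ⋅ ocm D (idm b) (iotai N)) (idm (oc D c a))
  ⋅ zeta b c (one D) a ⋅ ocm D (idm (ob D b c)) (lami (bul D) a).
Arguments dist_ll {D} N a b c.
Arguments dist_lr {D} N a b c.
Arguments dist_rl {D} N a b c.
Arguments dist_rr {D} N a b c.


(* Each distributor is a composite of an inverse unitor of [•], a component
   of [zeta], and a unitor of [∘] precomposed with [iota^-1].  Each piece
   commutes with the opmonoidal structure maps of [T]: the unitors because [T]
   is opmonoidal for both tensors, [zeta] by the double-opmonoidal axiom, and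
   [iota^-1] as the inverse of the [iota] axiom.  Pasting the three commuting
   squares gives the result. *)

Section CategoryLaws.
Context {C : Category}.

Lemma compA {a b c d : C} (h : Hom c d) (g : Hom b c) (f : Hom a b) :
  h ⋅ (g ⋅ f) = h ⋅ g ⋅ f.
Proof. exact (comp_assoc _ (claws C) _ _ _ _ h g f). Qed.

Lemma idm_comp {a b : C} (f : Hom a b) : idm b ⋅ f = f.
Proof. exact (comp_idl _ (claws C) _ _ f). Qed.

Lemma comp_idm {a b : C} (f : Hom a b) : f ⋅ idm a = f.
Proof. exact (comp_idr _ (claws C) _ _ f). Qed.

End CategoryLaws.

Section Squares.
Context {C : Category} {T : MonadData C}.
Hypothesis HT : IsMonad T.

Definition Tsquare {x y X Y : C} (hx : Hom (T x) X) (hy : Hom (T y) Y)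
    (f : Hom x y) (g : Hom X Y) : Prop :=
  hy ⋅ T1 T f = g ⋅ hx.

Lemma Tsquare_id {x X : C} (h : Hom (T x) X) : Tsquare h h (idm x) (idm X).
Proof.
  unfold Tsquare; rewrite (T1_id _ _ HT), comp_idm, idm_comp; reflexivity.
Qed.

Lemma Tsquare_comp {x y z X Y Z : C} (hx : Hom (T x) X) (hy : Hom (T y) Y)
    (hz : Hom (T z) Z) (f : Hom x y) (f' : Hom y z) (g : Hom X Y) (g' : Hom Y Z) :
  Tsquare hx hy f g -> Tsquare hy hz f' g' -> Tsquare hx hz (f' ⋅ f) (g' ⋅ g).
Proof.
  unfold Tsquare; intros Hf Hf'.
  rewrite (T1_comp _ _ HT), compA, Hf', <- compA, Hf, compA; reflexivity.
Qed.

Lemma Tsquare_inv {x y X Y : C} (hx : Hom (T x) X) (hy : Hom (T y) Y)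
    (f : Hom x y) (fi : Hom y x) (g : Hom X Y) (gi : Hom Y X) :
  f ⋅ fi = idm y -> gi ⋅ g = idm X ->
  Tsquare hx hy f g -> Tsquare hy hx fi gi.
Proof.
  unfold Tsquare; intros Hf Hg Hsq.
  rewrite <- (idm_comp (hx ⋅ _)), <- Hg, <- !compA, (compA g), <- Hsq,
    <- compA, <- (T1_comp _ _ HT), Hf, (T1_id _ _ HT), comp_idm; reflexivity.
Qed.

End Squares.

Section MonoidalSquares.
Context {C : Category} {M : Monoidal C} {T : MonadData C}.
Hypothesis HT : IsMonad T.
Context {B : OpmonData M T}.
Hypothesis HB : IsBimonad B.

Lemma tensm_idm_comp {a b X : C} (h : Hom X (tens M a b)) :
  tensm M (idm a) (idm b) ⋅ h = h.
Proof. rewrite (tens_id _ _ (mlaws _ M)); apply idm_comp. Qed.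

Lemma Tsquare_tensm {x x' y y' X X' Y Y' : C}
    (P : Hom (T x) X) (P' : Hom (T x') X') (Q : Hom (T y) Y) (Q' : Hom (T y') Y')
    (f : Hom x x') (f' : Hom X X') (g : Hom y y') (g' : Hom Y Y') :
  Tsquare P P' f f' -> Tsquare Q Q' g g' ->
  Tsquare (tensm M P Q ⋅ op2 B x y) (tensm M P' Q' ⋅ op2 B x' y')
          (tensm M f g) (tensm M f' g').
Proof.
  unfold Tsquare; intros Hf Hg.
  rewrite <- compA, (op2_nat _ _ _ _ HB), compA, <- (tens_comp _ _ (mlaws _ M)),
    Hf, Hg, (tens_comp _ _ (mlaws _ M)), compA; reflexivity.
Qed.

Lemma Tsquare_lam (x : C) :
  Tsquare (tensm M (op0 B) (idm (T x)) ⋅ op2 B (munit M) x) (idm (T x))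
          (lam M x) (lam M (T x)).
Proof.
  unfold Tsquare; rewrite idm_comp, compA; symmetry; apply (op_lunit _ _ _ _ HB).
Qed.

Lemma Tsquare_rho (x : C) :
  Tsquare (tensm M (idm (T x)) (op0 B) ⋅ op2 B x (munit M)) (idm (T x))
          (rho M x) (rho M (T x)).
Proof.
  unfold Tsquare; rewrite idm_comp, compA; symmetry; apply (op_runit _ _ _ _ HB).
Qed.

Lemma Tsquare_lami (x : C) :
  Tsquare (idm (T x)) (tensm M (op0 B) (idm (T x)) ⋅ op2 B (munit M) x)
          (lami M x) (lami M (T x)).
Proof.
  apply (Tsquare_inv HT) with (f := lam M x) (g := lam M (T x));
    [ apply (lam_inv1 _ _ (mlaws _ M)) | apply (lam_inv2 _ _ (mlaws _ M))
    | apply Tsquare_lam ].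
Qed.

Lemma Tsquare_rhoi (x : C) :
  Tsquare (idm (T x)) (tensm M (idm (T x)) (op0 B) ⋅ op2 B x (munit M))
          (rhoi M x) (rhoi M (T x)).
Proof.
  apply (Tsquare_inv HT) with (f := rho M x) (g := rho M (T x));
    [ apply (rho_inv1 _ _ (mlaws _ M)) | apply (rho_inv2 _ _ (mlaws _ M))
    | apply Tsquare_rho ].
Qed.

End MonoidalSquares.

Section DuoidalSquares.
Variable D : Duoidal.
Variable N : NormalStructure D.
Variable T : DoubleOpmonoidalMonad D.

Let HT := dmon_laws D T.
Let HTb := Tbul_laws D T.
Let HTc := Tcirc_laws D T.

Lemma Tsquare_zeta {x y a b x' y' a' b' : dcat D}
    (p : Hom (T x) x') (q : Hom (T y) y') (r : Hom (T a) a') (s : Hom (T b) b') :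
  Tsquare (ocm D (obm D p q ⋅ op2 (Tbul T) x y) (obm D r s ⋅ op2 (Tbul T) a b)
             ⋅ op2 (Tcirc T) (ob D x y) (ob D a b))
          (obm D (ocm D p r ⋅ op2 (Tcirc T) x a) (ocm D q s ⋅ op2 (Tcirc T) y b)
             ⋅ op2 (Tbul T) (oc D x a) (oc D y b))
          (zeta x y a b) (zeta x' y' a' b').
Proof.
  pose proof (dm_zeta D T x y a b) as Hzeta.
  pose proof (zeta_nat D (dlaws D) _ _ _ _ _ _ _ _ p q r s) as Hnat.
  unfold Tsquare, ocm, obm, oc, ob in *.
  rewrite !(tens_comp _ _ (mlaws _ _)), <- !compA.
  rewrite <- !compA in Hzeta; rewrite <- Hzeta, !compA, Hnat; reflexivity.
Qed.

Lemma Tsquare_iotai :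
  Tsquare (op0 (Tbul T)) (op0 (Tcirc T)) (iotai N) (iotai N).
Proof.
  apply (Tsquare_inv HT) with (f := iota) (g := iota);
    [ apply iota_inv1 | apply iota_inv2 | apply (dm_iota D T) ].
Qed.

Lemma Tsquare_lam_iotai (c : dcat D) :
  Tsquare (ocm D (op0 (Tbul T)) (idm (T c)) ⋅ op2 (Tcirc T) (one D) c) (idm (T c))
          (lam (circ D) c ⋅ ocm D (iotai N) (idm c))
          (lam (circ D) (T c) ⋅ ocm D (iotai N) (idm (T c))).
Proof.
  apply (Tsquare_comp HT)
    with (hy := ocm D (op0 (Tcirc T)) (idm (T c)) ⋅ op2 (Tcirc T) (bot D) c).
  - apply (Tsquare_tensm HTc); [ apply Tsquare_iotai | apply (Tsquare_id HT) ].
  - apply (Tsquare_lam HTc).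
Qed.

Lemma Tsquare_rho_iotai (c : dcat D) :
  Tsquare (ocm D (idm (T c)) (op0 (Tbul T)) ⋅ op2 (Tcirc T) c (one D)) (idm (T c))
          (rho (circ D) c ⋅ ocm D (idm c) (iotai N))
          (rho (circ D) (T c) ⋅ ocm D (idm (T c)) (iotai N)).
Proof.
  apply (Tsquare_comp HT)
    with (hy := ocm D (idm (T c)) (op0 (Tcirc T)) ⋅ op2 (Tcirc T) c (bot D)).
  - apply (Tsquare_tensm HTc); [ apply (Tsquare_id HT) | apply Tsquare_iotai ].
  - apply (Tsquare_rho HTc).
Qed.

Lemma Tsquare_dist_ll (a b c : dcat D) :
  Tsquare (ocm D (idm (T a)) (op2 (Tbul T) b c) ⋅ op2 (Tcirc T) a (ob D b c))
          (obm D (op2 (Tcirc T) a b) (idm (T c)) ⋅ op2 (Tbul T) (oc D a b) c)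
          (dist_ll N a b c) (dist_ll N (T a) (T b) (T c)).
Proof.
  unfold dist_ll.
  apply (Tsquare_comp HT) with (hy :=
    ocm D (obm D (idm (T a)) (op0 (Tbul T)) ⋅ op2 (Tbul T) a (one D))
          (obm D (idm (T b)) (idm (T c)) ⋅ op2 (Tbul T) b c)
      ⋅ op2 (Tcirc T) (ob D a (one D)) (ob D b c)).
  - apply (Tsquare_tensm HTc); [ apply (Tsquare_rhoi HT HTb) | ].
    unfold obm; rewrite tensm_idm_comp; apply (Tsquare_id HT).
  - apply (Tsquare_comp HT) with (hy :=
      obm D (ocm D (idm (T a)) (idm (T b)) ⋅ op2 (Tcirc T) a b)
            (ocm D (op0 (Tbul T)) (idm (T c)) ⋅ op2 (Tcirc T) (one D) c)
        ⋅ op2 (Tbul T) (oc D a b) (oc D (one D) c)).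
    + apply Tsquare_zeta.
    + apply (Tsquare_tensm HTb); [ | apply Tsquare_lam_iotai ].
      unfold ocm; rewrite tensm_idm_comp; apply (Tsquare_id HT).
Qed.

Lemma Tsquare_dist_lr (a b c : dcat D) :
  Tsquare (ocm D (idm (T a)) (op2 (Tbul T) b c) ⋅ op2 (Tcirc T) a (ob D b c))
          (obm D (idm (T b)) (op2 (Tcirc T) a c) ⋅ op2 (Tbul T) b (oc D a c))
          (dist_lr N a b c) (dist_lr N (T a) (T b) (T c)).
Proof.
  unfold dist_lr.
  apply (Tsquare_comp HT) with (hy :=
    ocm D (obm D (op0 (Tbul T)) (idm (T a)) ⋅ op2 (Tbul T) (one D) a)
          (obm D (idm (T b)) (idm (T c)) ⋅ op2 (Tbul T) b c)
      ⋅ op2 (Tcirc T) (ob D (one D) a) (ob D b c)).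
  - apply (Tsquare_tensm HTc); [ apply (Tsquare_lami HT HTb) | ].
    unfold obm; rewrite tensm_idm_comp; apply (Tsquare_id HT).
  - apply (Tsquare_comp HT) with (hy :=
      obm D (ocm D (op0 (Tbul T)) (idm (T b)) ⋅ op2 (Tcirc T) (one D) b)
            (ocm D (idm (T a)) (idm (T c)) ⋅ op2 (Tcirc T) a c)
        ⋅ op2 (Tbul T) (oc D (one D) b) (oc D a c)).
    + apply Tsquare_zeta.
    + apply (Tsquare_tensm HTb); [ apply Tsquare_lam_iotai | ].
      unfold ocm; rewrite tensm_idm_comp; apply (Tsquare_id HT).
Qed.

Lemma Tsquare_dist_rl (a b c : dcat D) :
  Tsquare (ocm D (op2 (Tbul T) b c) (idm (T a)) ⋅ op2 (Tcirc T) (ob D b c) a)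
          (obm D (op2 (Tcirc T) b a) (idm (T c)) ⋅ op2 (Tbul T) (oc D b a) c)
          (dist_rl N a b c) (dist_rl N (T a) (T b) (T c)).
Proof.
  unfold dist_rl.
  apply (Tsquare_comp HT) with (hy :=
    ocm D (obm D (idm (T b)) (idm (T c)) ⋅ op2 (Tbul T) b c)
          (obm D (idm (T a)) (op0 (Tbul T)) ⋅ op2 (Tbul T) a (one D))
      ⋅ op2 (Tcirc T) (ob D b c) (ob D a (one D))).
  - apply (Tsquare_tensm HTc); [ | apply (Tsquare_rhoi HT HTb) ].
    unfold obm; rewrite tensm_idm_comp; apply (Tsquare_id HT).
  - apply (Tsquare_comp HT) with (hy :=
      obm D (ocm D (idm (T b)) (idm (T a)) ⋅ op2 (Tcirc T) b a)
            (ocm D (idm (T c)) (op0 (Tbul T)) ⋅ op2 (Tcirc T) c (one D))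
        ⋅ op2 (Tbul T) (oc D b a) (oc D c (one D))).
    + apply Tsquare_zeta.
    + apply (Tsquare_tensm HTb); [ | apply Tsquare_rho_iotai ].
      unfold ocm; rewrite tensm_idm_comp; apply (Tsquare_id HT).
Qed.

Lemma Tsquare_dist_rr (a b c : dcat D) :
  Tsquare (ocm D (op2 (Tbul T) b c) (idm (T a)) ⋅ op2 (Tcirc T) (ob D b c) a)
          (obm D (idm (T b)) (op2 (Tcirc T) c a) ⋅ op2 (Tbul T) b (oc D c a))
          (dist_rr N a b c) (dist_rr N (T a) (T b) (T c)).
Proof.
  unfold dist_rr.
  apply (Tsquare_comp HT) with (hy :=
    ocm D (obm D (idm (T b)) (idm (T c)) ⋅ op2 (Tbul T) b c)
          (obm D (op0 (Tbul T)) (idm (T a)) ⋅ op2 (Tbul T) (one D) a)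
      ⋅ op2 (Tcirc T) (ob D b c) (ob D (one D) a)).
  - apply (Tsquare_tensm HTc); [ | apply (Tsquare_lami HT HTb) ].
    unfold obm; rewrite tensm_idm_comp; apply (Tsquare_id HT).
  - apply (Tsquare_comp HT) with (hy :=
      obm D (ocm D (idm (T b)) (op0 (Tbul T)) ⋅ op2 (Tcirc T) b (one D))
            (ocm D (idm (T c)) (idm (T a)) ⋅ op2 (Tcirc T) c a)
        ⋅ op2 (Tbul T) (oc D b (one D)) (oc D c a)).
    + apply Tsquare_zeta.
    + apply (Tsquare_tensm HTb); [ apply Tsquare_rho_iotai | ].
      unfold ocm; rewrite tensm_idm_comp; apply (Tsquare_id HT).
Qed.

End DuoidalSquares.

Theorem mainTheorem4 (D : Duoidal) (N : NormalStructure D)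
  (T : DoubleOpmonoidalMonad D) :
  forall a b c : dcat D,
    (* (1) *)
    obm D (op2 (Tcirc T) a b) (idm (T c)) ⋅ op2 (Tbul T) (oc D a b) c
      ⋅ T1 T (dist_ll N a b c)
    = dist_ll N (T a) (T b) (T c) ⋅ ocm D (idm (T a)) (op2 (Tbul T) b c)
      ⋅ op2 (Tcirc T) a (ob D b c)
 /\ (* (2) *)
    obm D (idm (T b)) (op2 (Tcirc T) c a) ⋅ op2 (Tbul T) b (oc D c a)
      ⋅ T1 T (dist_rr N a b c)
    = dist_rr N (T a) (T b) (T c) ⋅ ocm D (op2 (Tbul T) b c) (idm (T a))
      ⋅ op2 (Tcirc T) (ob D b c) a
 /\ (* (3) *)
    obm D (idm (T b)) (op2 (Tcirc T) a c) ⋅ op2 (Tbul T) b (oc D a c)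
      ⋅ T1 T (dist_lr N a b c)
    = dist_lr N (T a) (T b) (T c) ⋅ ocm D (idm (T a)) (op2 (Tbul T) b c)
      ⋅ op2 (Tcirc T) a (ob D b c)
 /\ (* (4) *)
    obm D (op2 (Tcirc T) b a) (idm (T c)) ⋅ op2 (Tbul T) (oc D b a) c
      ⋅ T1 T (dist_rl N a b c)
    = dist_rl N (T a) (T b) (T c) ⋅ ocm D (op2 (Tbul T) b c) (idm (T a))
      ⋅ op2 (Tcirc T) (ob D b c) a.
Proof.
  intros a b c; repeat split.
  - rewrite <- (compA (dist_ll N _ _ _)); apply Tsquare_dist_ll.
  - rewrite <- (compA (dist_rr N _ _ _)); apply Tsquare_dist_rr.
  - rewrite <- (compA (dist_lr N _ _ _)); apply Tsquare_dist_lr.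
  - rewrite <- (compA (dist_rl N _ _ _)); apply Tsquare_dist_rl.
Qed.
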